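(* Let $D$ be a nonempty closed subset of $\mathbb R$ with $D\subseteq(0,1)$. Let $c:[0,1]\to[0,\infty]$ be grounded and lower semicontinuous with $c(1)=\infty$, and let $\succsim$ be the binary relation on $l_\infty$ represented by $I(x)=\min_{\delta\in[0,1)}\{(1-\delta)\sum_{t\ge0}\delta^tx_t+c(\delta)\}$ (i.e. $x\succsim y\iff I(x)\ge I(y)$). Then the following are equivalent: (i) $\succsim$ satisfies Unanimity: for all $x,y\in l_\infty$, if $(1-\delta)\sum_t\delta^tx_t\ge(1-\delta)\sum_t\delta^ty_t$ for all $\delta\in D$, then $x\succsim y$; (ii) $c(\delta)=\infty$ for every $\delta\in[0,1]\setminus D$. Consequently, under (i), $I(x)=\min_{\delta\in D}\{(1-\delta)\sum_{t\ge0}\delta^tx_t+c(\delta)\}$.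
   Context: $l_\infty$: real bounded sequences $x=(x_0,x_1,\dots)$. A function is grounded if its infimum is $0$. Convention $0^0=1$. *)

From HB Require Import structures.
From mathcomp Require Import all_boot all_order all_algebra.
From mathcomp Require Import all_classical all_reals all_analysis.
Set Implicit Arguments. Unset Strict Implicit. Unset Printing Implicit Defensive.
Import Order.TTheory GRing.Theory Num.Theory.
Import numFieldNormedType.Exports.
Local Open Scope classical_set_scope.
Local Open Scope ring_scope.

Definition linfty (R : realType) (x : nat -> R) : Prop :=
  exists M : R, forall t, `|x t| <= M.

Definition dsum (R : realType) (d : R) (x : nat -> R) : R :=
  (1 - d) * limn (series (fun t => d ^+ t * x t)).

Definition grounded (R : realType) (c : R -> \bar R) : Prop :=
  ereal_inf [set c d | d in `[0, 1]%classic] = 0%E.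

Definition lsc01 (R : realType) (c : R -> \bar R) : Prop :=
  forall a, a \in `[0, 1] -> forall r : \bar R, (r < c a)%E ->
    exists2 e : R, 0 < e & forall b, b \in `[0, 1] -> `|b - a| < e -> (r < c b)%E.

Definition objval (R : realType) (c : R -> \bar R) (x : nat -> R) (d : R) : \bar R :=
  ((dsum d x)%:E + c d)%E.

(* I(x) = min_{d in [0,1)} { (1-d) sum_t d^t x_t + c(d) } (taken as an infimum;
   attainment is a property, not part of the definition) *)
Definition Ifun (R : realType) (c : R -> \bar R) (x : nat -> R) : \bar R :=
  ereal_inf [set objval c x d | d in `[0, 1[%classic].

Definition pref (R : realType) (c : R -> \bar R) (x y : nat -> R) : Prop :=
  (Ifun c y <= Ifun c x)%E.

Definition unanimity (R : realType) (D : set R) (c : R -> \bar R) : Prop :=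
  forall x y : nat -> R, linfty x -> linfty y ->
    (forall d, D d -> dsum d y <= dsum d x) -> pref c x y.

(* (ii) -> (i): when c is infinite off D, I is an infimum over D only, and each
   term (1 - d) sum_t d^t x_t + c(d) with d in D is monotone under the
   unanimity hypothesis.
   (i) -> (ii): if c(d) is finite for some d outside D, let r > 0 be the
   distance from d to the closed set D. The stream with normalized discounted
   value (1 - e) lam ((e - d)^2 - r^2) at every e is unanimously preferred to 0,
   but for lam large its objective at d is negative, so I(x) < 0 <= I(0).
   Attainment: D is compact, and the objective is lower semicontinuous on (0,1)
   because the discounted sum is Lipschitz in the discount factor on [0, b] for
   every b < 1. *)

From HB Require Import structures.
From mathcomp Require Import all_boot all_order all_algebra.
From mathcomp Require Import all_classical all_reals all_analysis.
From mathcomp Require Import ring lra.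
Set Implicit Arguments.
Unset Strict Implicit.
Unset Printing Implicit Defensive.
Import Order.TTheory GRing.Theory Num.Theory.
Import numFieldNormedType.Exports.
Local Open Scope classical_set_scope.
Local Open Scope ring_scope.

Section lower_semicontinuity.
Variable R : realType.
Local Open Scope ereal_scope.

Lemma lte_fin_between (a b : \bar R) : a < b -> exists r : R, a < r%:E < b.
Proof.
case: a => [a| |]; case: b => [b| |] //= ab.
- by exists ((a + b) / 2)%R; rewrite !lte_fin; move: ab; rewrite lte_fin; lra.
- by exists (a + 1)%R; rewrite ltry lte_fin ltrDl ltr01.
- by exists (b - 1)%R; rewrite ltNyr lte_fin gtrDl ltrN10.
- by exists 0%R; rewrite ltNyr ltry.
Qed.

Definition lsc_within {T : topologicalType} (P : set T) (f : T -> \bar R) (a : T) :=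
  forall r : R, r%:E < f a -> \forall y \near a, P y -> r%:E < f y.

Lemma lsc_withinS (T : topologicalType) (P Q : set T) (f : T -> \bar R) a :
  P `<=` Q -> lsc_within Q f a -> lsc_within P f a.
Proof. by move=> PQ fQ r /fQ; apply: filterS => y Qy /PQ. Qed.

Lemma lsc_within_addl (T : topologicalType) (P : set T) (g : T -> R) (f : T -> \bar R) a :
  {for a, continuous g} -> lsc_within P f a ->
  lsc_within P (fun y => (g y)%:E + f y) a.
Proof.
move=> gc fl r; rewrite addeC -lte_subel_addr // => /lte_fin_between [u /andP[ru uf]].
have e0 : (0 < u - (r - g a))%R by rewrite subr_gt0 -lte_fin.
have := fl u uf; have /cvgrPdist_lt/(_ _ e0) := gc; apply: filter_app2; near=> y.
move=> gy fy /fy uy; rewrite addeC -lte_subel_addr // -EFinB; apply: lt_trans uy.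
by rewrite lte_fin; move: gy; rewrite ltr_norml; lra.
Unshelve. all: by end_near. Qed.

(* If the infimum m is not attained, compactness turns the pointwise strict
   bounds m < f x into a uniform bound i <= f on K for reals i approaching m
   from above (from -oo if m = -oo), whence i <= m. *)
Lemma compact_lsc_attains_inf (T : topologicalType) (K : set T) (f : T -> \bar R) :
  compact K -> K !=set0 -> (forall x, K x -> lsc_within K f x) ->
  exists2 x, K x & ereal_inf (f @` K) = f x.
Proof.
move=> /compact_near_coveringP/near_covering_withinP cK [x0 Kx0] fl.
set m := ereal_inf (f @` K).
have [//|no_min] := pselect (exists2 x, K x & m = f x); exfalso.
have mlt x : K x -> m < f x.
  move=> Kx; rewrite lt_neqAle ereal_inf_lbound /= ?andbT; last by exists x.
  by apply/eqP => mfx; apply: no_min; exists x.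
have below F : ProperFilter F -> (forall u : R, m < u%:E -> \forall i \near F, (i < u)%R) ->
    \forall i \near F, i%:E <= m.
  move=> FF Fm; have : \forall i \near F, K `<=` (fun y => i%:E < f y).
    apply: cK => x Kx; have [u /andP[mu ufx]] := lte_fin_between (mlt x Kx).
    exists ([set y | K y -> u%:E < f y], [set i | (i < u)%R]).
      by split; [exact: fl | exact: Fm].
    by move=> [y i] /= [Kuy iu] Ky; apply: lt_trans (Kuy Ky); rewrite lte_fin.
  apply: filterS => i Ki; apply: le_ereal_inf_tmp => _ [y Ky <-].
  exact/ltW/Ki.
move: mlt below; clear no_min; rewrite /m; case: ereal_inf => [r| |] mlt below.
- have [i [ri ir]] := filter_ex (filterI (nbhs_right_gt r)
    (below _ _ (fun u => @nbhs_right_lt _ r u))).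
  by move: ir; rewrite lee_fin leNgt ri.
- by have := mlt x0 Kx0; rewrite ltNge leey.
- have [i] := filter_ex (below _ _ (fun u _ => nbhs_ninfty_lt (num_real u))).
  by rewrite leeNy_eq.
Qed.

End lower_semicontinuity.

Definition dseries (R : realType) (d : R) (x : nat -> R) := series (fun t => d ^+ t * x t).

Section discounted_series.
Variable R : realType.

Lemma abs_limn_le (u : nat -> R) K : cvgn u -> (forall n, `|u n| <= K) ->
  `|limn u| <= K.
Proof.
move=> cu uK; rewrite -lim_norm //; apply: limr_le; first exact: is_cvg_norm.
by near=> n; apply: uK.
Unshelve. all: by end_near. Qed.

Lemma normB_exprn_le (b d s : R) t : 0 <= d <= b -> 0 <= s <= b ->
  b * `|d ^+ t - s ^+ t| <= t%:R * b ^+ t * `|d - s|.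
Proof.
move=> /andP[d0 db] /andP[s0 sb]; have b0 : 0 <= b by apply: le_trans db.
elim: t => [|t IHt]; first by rewrite !expr0 subrr normr0 mulr0 !mul0r.
have -> : d ^+ t.+1 - s ^+ t.+1 = d * (d ^+ t - s ^+ t) + s ^+ t * (d - s).
  by rewrite !exprS; ring.
apply: (@le_trans _ _ (b * (d * `|d ^+ t - s ^+ t| + s ^+ t * `|d - s|))).
  apply: ler_wpM2l => //; apply: le_trans (ler_normD _ _) _.
  by rewrite !normrM (ger0_norm d0) (ger0_norm (exprn_ge0 _ s0)).
have head_le : d * (b * `|d ^+ t - s ^+ t|) <= b * (t%:R * b ^+ t * `|d - s|).
  apply: le_trans (ler_wpM2l d0 IHt) _; apply: ler_wpM2r => //.
  by rewrite !mulr_ge0 ?exprn_ge0.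
have tail_le : b * (s ^+ t * `|d - s|) <= b * (b ^+ t * `|d - s|).
  by apply: ler_wpM2l => //; apply: ler_wpM2r => //; exact: lerXn2r.
have -> : t.+1%:R * b ^+ t.+1 * `|d - s| =
  b * (t%:R * b ^+ t * `|d - s|) + b * (b ^+ t * `|d - s|) by rewrite -natr1 exprS; ring.
by rewrite mulrDr mulrCA; apply: lerD.
Qed.

Lemma weighted_geometric_sum_le (b : R) n : 0 <= b <= 1 ->
  (1 - b) ^+ 2 * \sum_(t < n) t%:R * b ^+ t <= b.
Proof.
move=> /andP[b0 b1].
have -> : (1 - b) ^+ 2 * \sum_(t < n) t%:R * b ^+ t
    = b - n%:R * b ^+ n + (n%:R - 1) * b ^+ n.+1.
  elim: n => [|n IHn]; first by rewrite big_ord0 mulr0 expr0 expr1 mul0r; ring.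
  by rewrite big_ord_recr /= mulrDr IHn -natr1 !exprS; ring.
have bn0 : 0 <= b ^+ n by exact: exprn_ge0.
have n0 : (0 : R) <= n%:R by [].
have : 0 <= b ^+ n * (n%:R * (1 - b) + b) by rewrite mulr_ge0 // addr_ge0 // mulr_ge0; lra.
rewrite exprS; nra.
Qed.

Variables (x : nat -> R) (M : R).
Hypothesis xM : forall t, `|x t| <= M.

Let M_ge0 : 0 <= M. Proof. exact: le_trans (xM 0%N). Qed.

Lemma cvgn_dseries d : 0 <= d < 1 -> cvgn (dseries d x).
Proof.
move=> /andP[d0 d1]; apply: (@normed_cvg _ R^o).
apply: (@series_le_cvg _ _ (geometric M d)).
- by move=> n; rewrite normr_ge0.
- by move=> n; apply: geometric_ge0.
- move=> n /=; rewrite normrM normrX ger0_norm // mulrC.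
  by apply: ler_wpM2r; [exact: exprn_ge0 | exact: xM].
- by apply: is_cvg_geometric_series; rewrite ger0_norm.
Qed.

Lemma abs_dseriesB_le b d s n : 0 < b < 1 -> 0 <= d <= b -> 0 <= s <= b ->
  `|dseries d x n - dseries s x n| <= M * `|d - s| / (1 - b) ^+ 2.
Proof.
move=> /andP[b0 b1] db sb.
have q0 : 0 < (1 - b) ^+ 2 by rewrite exprn_gt0 // subr_gt0.
have powers : \sum_(t < n) `|d ^+ t - s ^+ t| <= `|d - s| / (1 - b) ^+ 2.
  rewrite -(ler_pM2l b0) mulr_sumr.
  apply: (@le_trans _ _ (\sum_(t < n) t%:R * b ^+ t * `|d - s|)).
    by apply: ler_sum => i _; exact: normB_exprn_le.
  rewrite -mulr_suml mulrCA mulrC; apply: ler_wpM2l => //.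
  by rewrite ler_pdivlMr // mulrC weighted_geometric_sum_le // !ltW.
rewrite /dseries !seriesEord /= -sumrB; apply: le_trans (ler_norm_sum _ _ _) _.
apply: (@le_trans _ _ (M * \sum_(t < n) `|d ^+ t - s ^+ t|)).
  rewrite mulr_sumr; apply: ler_sum => i _.
  by rewrite -mulrBl normrM mulrC; exact: ler_wpM2r.
by rewrite -mulrA; exact: ler_wpM2l.
Qed.

Lemma abs_limn_dseriesB_le b d s : 0 < b < 1 -> 0 <= d <= b -> 0 <= s <= b ->
  `|limn (dseries d x) - limn (dseries s x)| <= M * `|d - s| / (1 - b) ^+ 2.
Proof.
move=> /[dup] b01 /andP[_ b1] /[dup] db /andP[d0 /le_lt_trans/(_ b1) d1].
move=> /[dup] sb /andP[s0 /le_lt_trans/(_ b1) s1].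
have cd : cvgn (dseries d x) by apply: cvgn_dseries; rewrite d0.
have cs : cvgn (dseries s x) by apply: cvgn_dseries; rewrite s0.
rewrite -limB //; apply: abs_limn_le; first exact: is_cvgB.
by move=> n; exact: abs_dseriesB_le.
Qed.

Lemma limn_dseries_continuous s : 0 < s < 1 ->
  {for s, continuous (fun d => limn (dseries d x))}.
Proof.
move=> /andP[s0 s1]; set b := (1 + s) / 2.
have b01 : 0 < b < 1 by apply/andP; split; rewrite /b; lra.
set L := M / (1 - b) ^+ 2.
have L0 : 0 <= L by rewrite divr_ge0 // exprn_ge0 // subr_ge0 /b; lra.
apply/cvgrPdist_lt => e e0; have e'0 : 0 < e / (L + 1) by rewrite divr_gt0 // ltr_wpDl.
have s_in : s \in `]0, b[ by rewrite in_itv /= s0 /b; lra.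
near=> d.
have : d \in `]0, b[ by near: d; exact: near_in_itvoo.
rewrite in_itv /= => /andP[d0 db].
have sd : `|s - d| < e / (L + 1).
  by near: d; apply/nbhs_ballP; exists (e / (L + 1)) => //= y; rewrite /ball /=.
have sb : 0 <= s <= b by rewrite (ltW s0) /b; lra.
rewrite distrC; apply: le_lt_trans (abs_limn_dseriesB_le b01 _ sb) _; first by rewrite !ltW.
rewrite mulrAC -/L distrC; have := normr_ge0 (s - d).
by move: sd; rewrite ltr_pdivlMr ?ltr_wpDl //; nra.
Unshelve. all: by end_near. Qed.

End discounted_series.

Lemma dsum_continuous (R : realType) (x : nat -> R) (s : R) : linfty x -> 0 < s < 1 ->
  {for s, continuous (fun d => dsum d x)}.
Proof.
move=> [M xM] s01; apply: cvgM (limn_dseries_continuous xM s01).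
by apply: cvgB; [exact: cvg_cst | exact: cvg_id].
Qed.

Section finite_sequences.
Variable R : realType.

Lemma dsum_nth (d : R) (s : seq R) :
  dsum d (nth 0 s) = (1 - d) * \sum_(t < size s) d ^+ t * s`_t.
Proof.
rewrite /dsum; congr (_ * _); apply: cvg_lim => //; apply: cvg_near_cst.
near=> n; have sn : (size s <= n)%N by near: n; exists (size s).
rewrite seriesEord /= (big_ord_widen n (fun t => d ^+ t * s`_t) sn) [RHS]big_mkcond /=.
by apply: eq_bigr => i _; case: ltnP => // /(nth_default 0) ->; rewrite mulr0.
Unshelve. all: by end_near. Qed.

Lemma dsum0 (d : R) : dsum d (fun=> 0) = 0.
Proof.
rewrite /dsum (_ : series _ = fun=> 0) ?lim_cst ?mulr0 //.
by apply: funext => n; rewrite seriesEord /= big1 // => i _; rewrite mulr0.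
Qed.

Lemma linfty_nth (s : seq R) : linfty (nth 0 s).
Proof.
exists (\sum_(a <- s) `|a|) => t.
elim: s t => [|a s IHs] t; first by rewrite nth_nil normr0 big_nil.
rewrite big_cons; case: t => [|t] /=; first by rewrite lerDl; apply: sumr_ge0.
by apply: le_trans (IHs t) _; rewrite lerDr.
Qed.

End finite_sequences.

Section unanimity.
Variable R : realType.
Implicit Types (D : set R) (c : R -> \bar R) (x : nat -> R).

Definition infinite_off D c := forall d, d \in `[0, 1] -> ~ D d -> c d = +oo%E.

Lemma Ifun_infinite_off D c x : D `<=` `]0, 1[%classic -> infinite_off D c ->
  Ifun c x = ereal_inf [set objval c x d | d in D].
Proof.
move=> D01 cD; apply/le_anti/andP; split.
  apply: le_ereal_inf_tmp => _ [d Dd <-]; apply: ereal_inf_lbound; exists d => //.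
  by have := D01 d Dd; rewrite /= !in_itv /= => /andP[d0 ->]; rewrite ltW.
apply: le_ereal_inf_tmp => _ [d d01 <-]; have [Dd|nDd] := pselect (D d).
  by apply: ereal_inf_lbound; exists d.
move: d01; rewrite /= in_itv /= => /andP[d0 d1].
by rewrite /objval cD ?addey ?leey // in_itv /= d0 ltW.
Qed.

Lemma infinite_off_unanimity D c : D `<=` `]0, 1[%classic -> infinite_off D c ->
  unanimity D c.
Proof.
move=> D01 cD x y _ _ yx; rewrite /pref !(Ifun_infinite_off _ D01 cD).
apply: le_ereal_inf_tmp => _ [d Dd <-]; apply: ge_ereal_inf.
exists (objval c y d); first by exists d.
by apply: leeD => //; rewrite lee_fin; apply: yx.
Qed.

Lemma closed_dist_gap D a : closed D -> ~ D a ->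
  exists2 r : R, 0 < r & forall d, D d -> r <= `|d - a|.
Proof.
move=> cD Da; have : nbhs a (~` D) by apply: open_nbhs_nbhs; split => //; exact: closed_openC.
move=> /nbhs_normP [e /= e0 eD]; exists e => // d Dd.
by rewrite leNgt; apply/negP => de; apply: (eD d) => //=; rewrite distrC.
Qed.

Lemma Ifun0_ge0 c : (forall d, d \in `[0, 1] -> (0 <= c d)%E) ->
  (0 <= Ifun c (fun=> 0%R))%E.
Proof.
move=> c0; apply: le_ereal_inf_tmp => _ [d d01 <-]; rewrite /objval dsum0 add0e.
by apply: c0; move: d01; rewrite /= !in_itv /= => /andP[-> /ltW ->].
Qed.

Lemma unanimity_infinite_off D c : D `<=` `]0, 1[%classic -> closed D ->
  (forall d, d \in `[0, 1] -> (0 <= c d)%E) -> c 1 = +oo%E ->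
  unanimity D c -> infinite_off D c.
Proof.
move=> D01 cD c0 c1 U d d01 Dd; have := c0 d d01; case cd: (c d) => [v| |] // v0.
exfalso; have {v0}v0 : 0 <= v by rewrite -lee_fin.
have d0 : 0 <= d by move: d01; rewrite in_itv /= => /andP[].
have d1 : d < 1.
  move: d01; rewrite in_itv /= lt_neqAle => /andP[_ ->]; rewrite andbT.
  by apply/eqP => d1; move: cd; rewrite d1 c1.
have [r r0 rD] := closed_dist_gap cD Dd.
have r2d0 : 0 < (1 - d) * r ^+ 2 by rewrite mulr_gt0 ?subr_gt0 // exprn_gt0.
set lam := (v + 1) / ((1 - d) * r ^+ 2).
have lam0 : 0 <= lam by rewrite divr_ge0 // ?ltW // ltr_wpDl.
set x := nth 0 [:: lam * (d ^+ 2 - r ^+ 2); lam * (-2 * d); lam].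
have dsum_x e : dsum e x = (1 - e) * (lam * ((e - d) ^+ 2 - r ^+ 2)).
  by rewrite dsum_nth !big_ord_recl big_ord0 /=; ring.
have x_ge0 e : D e -> dsum e (fun=> 0) <= dsum e x.
  move=> De; rewrite dsum0 dsum_x; have /andP[_ e1] : 0 < e < 1 by exact: D01.
  have gap : r ^+ 2 <= (e - d) ^+ 2.
    rewrite -[X in _ <= X]real_normK ?num_real // !expr2.
    by have := rD e De; have := ltW r0; nra.
  by apply: mulr_ge0; [rewrite subr_ge0 ltW | apply: mulr_ge0; rewrite // subr_ge0].
have dsum_xd : dsum d x = - (v + 1).
  have lamE : lam * ((1 - d) * r ^+ 2) = v + 1 by rewrite mulfVK ?gt_eqF.
  by rewrite dsum_x subrr expr0n /= -lamE; ring.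
have Ix : (Ifun c x <= (-1)%:E)%E.
  apply: ge_ereal_inf; exists (objval c x d); first by exists d; rewrite //= in_itv /= d0.
  by rewrite /objval cd dsum_xd -EFinD lee_fin; lra.
have zero_bounded : linfty (fun=> 0 : R) by exists 0 => _; rewrite normr0.
have := le_trans (Ifun0_ge0 c0) (le_trans (U x _ (linfty_nth _) zero_bounded x_ge0) Ix).
by rewrite lee_fin; lra.
Qed.

End unanimity.

Section attainment.
Variable R : realType.
Implicit Types (D : set R) (c : R -> \bar R) (x : nat -> R).

Lemma lsc01_lsc_within c (a : R) : lsc01 c -> a \in `[0, 1] ->
  lsc_within (`[0, 1]%classic : set R) c a.
Proof.
move=> lsc a01 r /(lsc a a01) [e e0 ce].
near=> b => b01; apply: ce b01 _; near: b.
by apply/nbhs_ballP; exists e => //= b; rewrite /ball /= distrC.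
Unshelve. all: by end_near. Qed.

Lemma objval_lsc_within c x d : lsc01 c -> linfty x -> 0 < d < 1 ->
  lsc_within (`[0, 1]%classic : set R) (objval c x) d.
Proof.
move=> lsc xb /[dup] d01 /andP[d0 d1].
apply: lsc_within_addl (dsum_continuous xb d01) _.
by apply: lsc01_lsc_within; rewrite // in_itv /= !ltW.
Qed.

Lemma objval_attains_inf D c x : D !=set0 -> closed D -> D `<=` `]0, 1[%classic ->
  lsc01 c -> linfty x -> exists2 d, D d & ereal_inf [set objval c x d | d in D] = objval c x d.
Proof.
move=> D0 cD D01 lsc xb.
have D01' : D `<=` `[0, 1]%classic.
  by move=> d /D01; rewrite /= !in_itv /= => /andP[d0 d1]; rewrite !ltW.
apply: compact_lsc_attains_inf => //.
  exact: subclosed_compact cD (@segment_compact _ 0 1) D01'.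
move=> d Dd; apply: lsc_withinS D01' _; apply: objval_lsc_within => //.
by have := D01 d Dd; rewrite /= in_itv.
Qed.

End attainment.

Theorem proposition4 (R : realType) (D : set R) (c : R -> \bar R) :
  D !=set0 -> closed D -> D `<=` `]0, 1[%classic ->
  (forall d, d \in `[0, 1] -> (0 <= c d)%E) ->
  grounded c -> lsc01 c -> c 1 = +oo%E ->
  (unanimity D c <->
     (forall d, d \in `[0, 1] -> ~ D d -> c d = +oo%E)) /\
  (unanimity D c ->
     forall x : nat -> R, linfty x ->
       Ifun c x = ereal_inf [set objval c x d | d in D] /\
       exists2 d, D d & Ifun c x = objval c x d).
Proof.
move=> D0 cD D01 c0 _ lsc c1.
have una_iff : unanimity D c <-> infinite_off D c.
  by split; [exact: unanimity_infinite_off | exact: infinite_off_unanimity].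
split=> // U x xb; rewrite (Ifun_infinite_off _ D01 (proj1 una_iff U)).
by split=> //; exact: objval_attains_inf.
Qed.
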